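(* Let $\mathbb K$ be an algebraically closed field and $n\ge 1$. For every integer $\mu$ with $0\le\mu\le\lfloor n/2\rfloor$, the closure of $\mathcal P^\mu_n$ in $\mathcal P_n$ (with the topology induced by the Zariski topology of $\mathbb K[t]_n^3\cong\mathbb A^{3n+3}$) equals $\mathcal P^0_n\cup\mathcal P^1_n\cup\dots\cup\mathcal P^\mu_n$. Equivalently, for $\mu<\lfloor n/2\rfloor$, every element of $\mathcal P^\mu_n$ lies in the closure of $\mathcal P^{\mu+1}_n$.
   Context: For a field $F$ and $a,b,c\in F[t]$, $\mathrm{Syz}(a,b,c)=\{(A,B,C)\in F[t]^3: Aa+Bb+Cc=0\}$, $\deg(A,B,C)=\max\{\deg A,\deg B,\deg C\}$, and the class is $\mu(a,b,c)=\min\{\deg(A,B,C): (A,B,C)\in \mathrm{Syz}(a,b,c)\setminus\{0\}\}$. $\mathbb K[t]_n$ denotes polynomials of degree $\le n$; $\mathcal P_n\subset \mathbb K[t]_n^3$ is the set of triples $(a,b,c)$ with $c\neq 0$, $\gcd(a,b,c)=1$ and $\max\{\deg a,\deg b,\deg c\}=n$; $\mathcal P^\mu_n=\{(a,b,c)\in\mathcal P_n:\mu(a,b,c)=\mu\}$. It is known that $\mathcal P_n=\mathcal P^0_n\cup\dots\cup\mathcal P^{\lfloor n/2\rfloor}_n$. *)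

From HB Require Import structures.
From mathcomp Require Import all_boot all_order all_algebra.
From mathcomp Require Import mpoly.
Set Implicit Arguments. Unset Strict Implicit. Unset Printing Implicit Defensive.
Import Order.TTheory GRing.Theory Num.Theory.
Local Open Scope ring_scope.

Section Defs.
Variable K : closedFieldType.

(* degree of a polynomial (deg 0 taken as 0; harmless inside max over a
   nonzero triple, since a nonzero component has degree >= 0) *)
Definition pdeg (p : {poly K}) : nat := (size p).-1.

Definition tdeg (A B C : {poly K}) : nat := maxn (pdeg A) (maxn (pdeg B) (pdeg C)).

Definition is_syz (a b c A B C : {poly K}) : Prop := A * a + B * b + C * c = 0.

Definition is_class (a b c : {poly K}) (m : nat) : Prop :=
  (exists A B C, is_syz a b c A B C /\ (A, B, C) != (0, 0, 0) /\ tdeg A B C = m) /\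
  (forall A B C, is_syz a b c A B C -> (A, B, C) != (0, 0, 0) -> (m <= tdeg A B C)%N).

Definition inP (n : nat) (a b c : {poly K}) : Prop :=
  c != 0 /\ coprimep (gcdp a b) c /\ maxn (size a) (maxn (size b) (size c)) = n.+1.

Definition inPmu (n mu : nat) (a b c : {poly K}) : Prop := inP n a b c /\ is_class a b c mu.

Definition coords (n : nat) (a b c : {poly K}) : 'I_(3 * n.+1) -> K :=
  fun i => let k := nat_of_ord i in
    if (k < n.+1)%N then a`_k
    else if (k < 2 * n.+1)%N then b`_(k - n.+1)
    else c`_(k - 2 * n.+1).

Arguments coords : clear implicits.

Definition zclosed (N : nat) (Z : ('I_N -> K) -> Prop) : Prop :=
  exists F : {mpoly K[N]} -> Prop, forall x, Z x <-> (forall p, F p -> p.@[x] = 0).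

Definition zclosure (N : nat) (S : ('I_N -> K) -> Prop) (x : 'I_N -> K) : Prop :=
  forall Z, zclosed Z -> (forall y, S y -> Z y) -> Z x.

Definition Pmu_pts (n mu : nat) : ('I_(3 * n.+1) -> K) -> Prop :=
  fun y => exists a b c : {poly K}, inPmu n mu a b c /\ y = coords n a b c.

End Defs.
Arguments coords {K} n a b c _.
Arguments zclosure {K N} S x.
Arguments Pmu_pts {K} n mu _.

(* Write T = (a, b, c). Syzygies of degree <= mu are the left kernel of a
   Sylvester-type matrix whose entries are coordinates of T, so "class <= mu"
   is the vanishing of its maximal minors: a Zariski-closed condition that
   holds on P^mu_n, hence on its closure.
   Conversely, let T have class m with 2m + 2 <= n. A minimal syzygy p is
   unimodular, and T = p x q with deg q = n - m (Hilbert-Burch). Deforming the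
   factors to p + s u and s^-1 X^d p + q + X^d u, where deg u = m + 1 and X^d u
   cancels the top coefficient of q, moves T along a line T + s W; for all but
   finitely many s this point lies in P_n and, by the converse of
   Hilbert-Burch, has class m + 1. A polynomial vanishing at all but finitely
   many points of a line vanishes on it, so T lies in the closure of
   P^(m+1)_n, and induction on mu concludes. *)

From HB Require Import structures.
From mathcomp Require Import all_boot all_order all_algebra.
From mathcomp Require Import mpoly.
From mathcomp Require Import zify ring.
From Stdlib Require Import Classical.
Set Implicit Arguments. Unset Strict Implicit. Unset Printing Implicit Defensive.
Import Order.TTheory GRing.Theory Num.Theory.
Local Open Scope ring_scope.

(** * Vectors of length three and the cross product *)

Record vec3 (R : Type) := Vec3 { vx : R; vy : R; vz : R }.
Arguments Vec3 {R}.

Section Vec3Ring.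
Variable R : comPzRingType.
Implicit Types U W P Q T e f : vec3 R.

Definition v0 : vec3 R := Vec3 0 0 0.
Definition vadd U W := Vec3 (vx U + vx W) (vy U + vy W) (vz U + vz W).
Definition vscale (k : R) U := Vec3 (k * vx U) (k * vy U) (k * vz U).
Definition dot U W := vx U * vx W + vy U * vy W + vz U * vz W.
Definition cross U W := Vec3 (vy U * vz W - vz U * vy W)
                             (vz U * vx W - vx U * vz W)
                             (vx U * vy W - vy U * vx W).

Ltac vsolve := repeat match goal with U : vec3 _ |- _ => destruct U end;
  rewrite /v0 /vadd /vscale /dot /cross /=; try congr Vec3; ring.

Lemma vec3E U : U = Vec3 (vx U) (vy U) (vz U). Proof. by case: U. Qed.

Lemma vadd0v U : vadd v0 U = U. Proof. vsolve. Qed.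
Lemma vaddv0 U : vadd U v0 = U. Proof. vsolve. Qed.
Lemma vscale0v U : vscale 0 U = v0. Proof. vsolve. Qed.
Lemma vscalev0 k : vscale k v0 = v0. Proof. vsolve. Qed.
Lemma vscale1v U : vscale 1 U = U. Proof. vsolve. Qed.
Lemma vscaleA a b U : vscale a (vscale b U) = vscale (a * b) U.
Proof. vsolve. Qed.
Lemma vadd_scaleN a U : vadd (vscale a U) (vscale (- a) U) = v0.
Proof. vsolve. Qed.
Lemma vadd_scale_eq0 U W s : vadd U (vscale s W) = v0 -> U = vscale (- s) W.
Proof.
case: U W => [x1 x2 x3] [y1 y2 y3] [] /= /eqP; rewrite addr_eq0 => /eqP ->.
move=> /eqP; rewrite addr_eq0 => /eqP -> /eqP; rewrite addr_eq0 => /eqP ->.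
vsolve.
Qed.

Lemma dotC U W : dot U W = dot W U. Proof. vsolve. Qed.
Lemma dot0v U : dot v0 U = 0. Proof. vsolve. Qed.
Lemma dotv0 U : dot U v0 = 0. Proof. vsolve. Qed.
Lemma dot_addr U W W' : dot U (vadd W W') = dot U W + dot U W'.
Proof. vsolve. Qed.
Lemma dot_scalel a U W : dot (vscale a U) W = a * dot U W.
Proof. vsolve. Qed.
Lemma dot_scaler a U W : dot U (vscale a W) = a * dot U W.
Proof. vsolve. Qed.

Lemma crossv0 U : cross U v0 = v0. Proof. vsolve. Qed.
Lemma cross0v U : cross v0 U = v0. Proof. vsolve. Qed.
Lemma crossvv U : cross U U = v0. Proof. vsolve. Qed.
Lemma crossNC U W : cross U W = vscale (-1) (cross W U).
Proof. vsolve. Qed.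
Lemma cross_addr U W W' : cross U (vadd W W') = vadd (cross U W) (cross U W').
Proof. vsolve. Qed.
Lemma cross_scalel a U W : cross (vscale a U) W = vscale a (cross U W).
Proof. vsolve. Qed.
Lemma cross_scaler a U W : cross U (vscale a W) = vscale a (cross U W).
Proof. vsolve. Qed.
Lemma cross_scale_same a b U : cross (vscale a U) (vscale b U) = v0.
Proof. vsolve. Qed.
Lemma dot_crossl P Q : dot P (cross P Q) = 0.
Proof. vsolve. Qed.

Lemma cross_crossr P T e :
  cross P (cross T e) = vadd (vscale (dot P e) T) (vscale (- dot P T) e).
Proof. vsolve. Qed.
Lemma cross_crossl V T e :
  cross (cross V T) e = vadd (vscale (dot V e) T) (vscale (- dot T e) V).
Proof. vsolve. Qed.
Lemma scale_dot_cross f P Q :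
  vscale (dot f Q) P = vadd (vscale (dot f P) Q) (cross f (cross P Q)).
Proof. vsolve. Qed.
Lemma cross_cross_commonr S P Q :
  cross (cross S Q) (cross P Q) = vscale (dot S (cross P Q)) Q.
Proof. vsolve. Qed.
Lemma cross_cross_commonl S P Q :
  cross (cross P S) (cross P Q) = vscale (- dot S (cross P Q)) P.
Proof. vsolve. Qed.

Lemma cross_eq0_scale V T e : cross V T = v0 -> dot T e = 1 -> V = vscale (dot V e) T.
Proof.
move=> VT0 Te1; have := cross_crossl V T e.
rewrite VT0 Te1 cross0v => VTe; rewrite -[LHS]vaddv0 VTe; vsolve.
Qed.

Lemma cross_deformation p q u (k k' g : R) :
  cross (vadd p (vscale k u)) (vadd (vscale (k' * g) p) (vadd q (vscale g u))) =
  vadd (vadd (cross p q) (vscale k (cross u (vadd q (vscale g u)))))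
       (vscale ((k * k' - 1) * g) (cross u p)).
Proof. vsolve. Qed.

Lemma cross_cross_shift p q u (g : R) :
  cross (cross p q) (cross u (vadd q (vscale g u))) = vscale (- dot (cross p q) u) q.
Proof. vsolve. Qed.

End Vec3Ring.

Section Vec3Domain.
Variable R : idomainType.
Implicit Types U P Q S : vec3 R.

Lemma vec3_neq0 U : U <> v0 R -> [\/ vx U != 0, vy U != 0 | vz U != 0].
Proof.
case: U => x y z /= U0; have [x0|] := eqVneq x 0; last by constructor 1.
have [y0|] := eqVneq y 0; last by constructor 2.
have [z0|] := eqVneq z 0; last by constructor 3.
by case: U0; rewrite x0 y0 z0.
Qed.

Lemma dot_eq1_neq0 U e : dot U e = 1 -> U <> v0 R.
Proof. by move=> Ue U0; move: Ue; rewrite U0 dot0v => /eqP; rewrite eq_sym oner_eq0. Qed.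

Lemma dot_neq0 U : U <> v0 R -> exists f, dot f U != 0.
Proof.
move=> /vec3_neq0 [] U0; [exists (Vec3 1 0 0)|exists (Vec3 0 1 0)|exists (Vec3 0 0 1)];
  by rewrite /dot /= !mul0r ?mul1r ?addr0 ?add0r.
Qed.

Lemma vscale_eq0 k U : k != 0 -> vscale k U = v0 R -> U = v0 R.
Proof.
case: U => x y z k0 [] /eqP; rewrite mulf_eq0 (negbTE k0) /= => /eqP ->.
move=> /eqP; rewrite mulf_eq0 (negbTE k0) /= => /eqP ->.
by move=> /eqP; rewrite mulf_eq0 (negbTE k0) /= => /eqP ->.
Qed.

Lemma cross_eq0_trans P Q S : S <> v0 R ->
  cross P S = v0 R -> cross S Q = v0 R -> cross P Q = v0 R.
Proof.
move=> /dot_neq0 [f fS0] PS0 SQ0.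
have QS0 : cross Q S = v0 R by rewrite crossNC SQ0 vscalev0.
apply: (@vscale_eq0 (dot f S ^+ 2)); first by rewrite expf_neq0.
have -> : vscale (dot f S ^+ 2) (cross P Q) =
    cross (vscale (dot f S) P) (vscale (dot f S) Q).
  by rewrite cross_scalel cross_scaler vscaleA -expr2.
rewrite (scale_dot_cross f P S) (scale_dot_cross f Q S) PS0 QS0 !crossv0 !vaddv0.
exact: cross_scale_same.
Qed.

End Vec3Domain.

Section Vec3Field.
Variable F : fieldType.
Implicit Types x y : vec3 F.

Lemma cross_eq0_parallel x y : x <> v0 F -> cross y x = v0 F -> exists l, y = vscale l x.
Proof.
move=> /dot_neq0 [f fx0] yx0; exists (dot f y / dot f x).
have := scale_dot_cross f y x; rewrite yx0 crossv0 vaddv0 => fxy.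
by rewrite mulrC -vscaleA -fxy vscaleA mulVf ?vscale1v.
Qed.

(* The s at which some coordinate of x + s y may vanish; an entry with
   y_i = 0 is the junk value x_i / 0 = 0. *)
Definition ratios x y : seq F := [:: - vx x / vx y; - vy x / vy y; - vz x / vz y].

Lemma addr_scale_neq0 (a b s : F) : a != 0 -> s != - a / b -> a + s * b != 0.
Proof.
move=> a0 sab; have [->|b0] := eqVneq b 0; first by rewrite mulr0 addr0.
by apply: contra sab; rewrite addr_eq0 => /eqP ->; rewrite opprK mulfK.
Qed.

Lemma vadd_scale_neq0 x y s : x <> v0 F -> s \notin ratios x y -> vadd x (vscale s y) <> v0 F.
Proof.
case: x y => [x1 x2 x3] [y1 y2 y3] /vec3_neq0 /= x0.
rewrite !inE !negb_or => /and3P [s1 s2 s3] [] /eqP e1 /eqP e2 /eqP e3.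
by case: x0 => /addr_scale_neq0 h;
  [move: (h _ _ s1) e1|move: (h _ _ s2) e2|move: (h _ _ s3) e3] => /negP.
Qed.

End Vec3Field.

Section PolyVec.
Variable F : fieldType.
Implicit Types (k p q : {poly F}) (U W : vec3 {poly F}).

Definition vsize U := maxn (size (vx U)) (maxn (size (vy U)) (size (vz U))).
Definition vcoef U i : vec3 F := Vec3 (vx U)`_i (vy U)`_i (vz U)`_i.
Definition vconst (c : vec3 F) : vec3 {poly F} := Vec3 (vx c)%:P (vy c)%:P (vz c)%:P.
Definition vhorner U (r : F) : vec3 F := Vec3 (vx U).[r] (vy U).[r] (vz U).[r].

Lemma vsize_leP U N : (vsize U <= N)%N <->
  [/\ (size (vx U) <= N)%N, (size (vy U) <= N)%N & (size (vz U) <= N)%N].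
Proof. by rewrite /vsize !geq_max; split => [/and3P [] | [-> -> ->]]. Qed.

Lemma size_polyD_le p q N : (size p <= N)%N -> (size q <= N)%N -> (size (p + q)%R <= N)%N.
Proof. by move=> pN qN; apply: leq_trans (size_polyD _ _) _; rewrite geq_max pN qN. Qed.

Lemma size_polyM_le p q a b : (size p <= a)%N -> (size q <= b)%N ->
  (size (p * q)%R <= (a + b).-1)%N.
Proof.
move=> pa qb; apply: leq_trans (size_polyMleq _ _) _.
by have := leq_add pa qb; lia.
Qed.

Lemma vsize_cross U W : (vsize (cross U W) <= (vsize U + vsize W).-1)%N.
Proof.
have /vsize_leP [U1 U2 U3] := leqnn (vsize U).
have /vsize_leP [W1 W2 W3] := leqnn (vsize W).
by apply/vsize_leP; split; apply: size_polyD_le; rewrite ?size_polyN; apply: size_polyM_le.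
Qed.

Lemma vsize_vadd U W N : (vsize U <= N)%N -> (vsize W <= N)%N -> (vsize (vadd U W) <= N)%N.
Proof.
move=> /vsize_leP [U1 U2 U3] /vsize_leP [W1 W2 W3].
by apply/vsize_leP; split; apply: size_polyD_le.
Qed.

Lemma vsize_vscale k U : (vsize (vscale k U) <= (size k + vsize U).-1)%N.
Proof.
have /vsize_leP [U1 U2 U3] := leqnn (vsize U).
by apply/vsize_leP; split; apply: size_polyM_le.
Qed.

Lemma vsize_vscaleC (c : F) U N : (vsize U <= N)%N -> (vsize (vscale c%:P U) <= N)%N.
Proof.
move=> UN; apply: leq_trans (vsize_vscale _ _) _.
by have := size_polyC_leq1 c; move: (size _) => s; lia.
Qed.

Lemma vsize_leqP U N : (vsize U <= N)%N <-> forall j, (N <= j)%N -> vcoef U j = v0 F.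
Proof.
split=> [/vsize_leP [U1 U2 U3] j Nj | U0].
  by rewrite /vcoef !nth_default //; apply: leq_trans Nj.
by apply/vsize_leP; split; apply/leq_sizeP => j /U0 [].
Qed.

Lemma vcoef_default U j : (vsize U <= j)%N -> vcoef U j = v0 F.
Proof. by move=> Uj; apply: (proj1 (vsize_leqP U j)). Qed.

Lemma vsize_eq0 U : vsize U = 0%N <-> U = v0 _.
Proof.
split=> [U0 | ->]; last by rewrite /vsize /= size_poly0.
have /vsize_leP [] : (vsize U <= 0)%N by rewrite U0.
by rewrite !leqn0 !size_poly_eq0 => /eqP U1 /eqP U2 /eqP U3; rewrite (vec3E U) U1 U2 U3.
Qed.

Lemma vsize_gt0 U : U <> v0 _ -> (0 < vsize U)%N.
Proof. by move=> U0; rewrite lt0n; apply/eqP => /vsize_eq0. Qed.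

Lemma vcoef_lead_neq0 U a : vsize U = a.+1 -> vcoef U a <> v0 F.
Proof.
move=> Ua Ua0; suff : (vsize U <= a)%N by rewrite Ua ltnn.
apply/vsize_leqP => j; rewrite leq_eqVlt => /orP [/eqP <- //|].
by rewrite -Ua; apply: vcoef_default.
Qed.

Lemma vsize_vcoef_eq U a : (vsize U <= a.+1)%N -> vcoef U a <> v0 F -> vsize U = a.+1.
Proof.
move=> Ua Ua0; apply/eqP; rewrite eqn_leq Ua ltnNge; apply/negP.
by move/vcoef_default.
Qed.

Lemma coefM_top p q a b : (size p <= a.+1)%N -> (size q <= b.+1)%N ->
  (p * q)`_(a + b) = p`_a * q`_b.
Proof.
move=> pa qb; rewrite coefM.
have aab : (a < (a + b).+1)%N by rewrite ltnS leq_addr.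
rewrite (bigD1 (Ordinal aab)) //= addKn big1 ?addr0 // => j /eqP ja.
have [jlt|jgt] := ltnP j a.
  by rewrite [q`__]nth_default ?mulr0 //; apply: leq_trans qb _; lia.
have {}ja : j != a :> nat by apply/eqP => e; apply: ja; apply: val_inj.
by rewrite [p`__]nth_default ?mul0r //; apply: leq_trans pa _; lia.
Qed.

Lemma vcoef_cross U W a b : (vsize U <= a.+1)%N -> (vsize W <= b.+1)%N ->
  vcoef (cross U W) (a + b) = cross (vcoef U a) (vcoef W b).
Proof.
move=> /vsize_leP [U1 U2 U3] /vsize_leP [W1 W2 W3].
by rewrite /vcoef /cross /= !coefB !coefM_top.
Qed.

Lemma vsize_vscaleCXn (c : F) d U : (vsize (vscale (c%:P * 'X^d) U) <= d + vsize U)%N.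
Proof.
apply: leq_trans (vsize_vscale _ _) _.
by have := size_polyM_le (size_polyC_leq1 c) (eq_leq (size_polyXn F d)); lia.
Qed.

Lemma vsize_vscale_lower k U : k != 0 -> U <> v0 _ ->
  ((size k).-1 + vsize U <= vsize (vscale k U))%N.
Proof.
move=> k0 /vsize_gt0 U_gt0.
have [a Ua] : exists a, vsize U = a.+1 by exists (vsize U).-1; rewrite prednK.
have [d kd] : exists d, size k = d.+1.
  by exists (size k).-1; rewrite prednK // size_poly_gt0.
have kU_top : vcoef (vscale k U) (d + a) = vscale (lead_coef k) (vcoef U a).
  have /vsize_leP [U1 U2 U3] : (vsize U <= a.+1)%N by rewrite Ua.
  by rewrite /vcoef /vscale /= !coefM_top ?kd // lead_coefE kd.
rewrite kd Ua /= addnS ltnNge; apply/negP => /vcoef_default.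
rewrite kU_top => /vscale_eq0; rewrite lead_coef_eq0 => /(_ k0).
exact: vcoef_lead_neq0.
Qed.

Lemma vcoef_vadd U W j : vcoef (vadd U W) j = vadd (vcoef U j) (vcoef W j).
Proof. by rewrite /vcoef /vadd /= !coefD. Qed.

Lemma vcoef_vscaleC (c : F) U j : vcoef (vscale c%:P U) j = vscale c (vcoef U j).
Proof. by rewrite /vcoef /vscale /= !coefCM. Qed.

Lemma vcoef_vscaleXn (k : nat) U j :
  vcoef (vscale 'X^k U) j = if (j < k)%N then v0 F else vcoef U (j - k).
Proof. by rewrite /vcoef /vscale /= !coefXnM; case: ifP. Qed.

Lemma vcoef_vconst c j : vcoef (vconst c) j = if j == 0%N then c else v0 F.
Proof. by rewrite /vcoef /vconst /= !coefC; case: eqP => //; case: c. Qed.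

Lemma dot_neq0_small U : U <> v0 _ -> exists f, (vsize f <= 1)%N /\ dot f U != 0.
Proof.
have small (a b c : {poly F}) : (size a <= 1)%N -> (size b <= 1)%N -> (size c <= 1)%N ->
  (vsize (Vec3 a b c) <= 1)%N by move=> *; apply/vsize_leP.
move=> /vec3_neq0 [] U0; [exists (Vec3 1 0 0)|exists (Vec3 0 1 0)|exists (Vec3 0 0 1)];
  rewrite small ?size_poly0 ?size_poly1 //; by rewrite /dot /= !mul0r ?mul1r ?addr0 ?add0r.
Qed.

Lemma vhorner_cross U W r : vhorner (cross U W) r = cross (vhorner U r) (vhorner W r).
Proof. by rewrite /vhorner /cross /= !hornerE. Qed.
Lemma horner_dot U W r : (dot U W).[r] = dot (vhorner U r) (vhorner W r).
Proof. by rewrite /vhorner /dot /= !hornerE. Qed.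
Lemma vhorner_vadd U W r : vhorner (vadd U W) r = vadd (vhorner U r) (vhorner W r).
Proof. by rewrite /vhorner /vadd /= !hornerE. Qed.
Lemma vhorner_vscale k U r : vhorner (vscale k U) r = vscale k.[r] (vhorner U r).
Proof. by rewrite /vhorner /vscale /= !hornerE. Qed.

End PolyVec.

(** * Minimal syzygies and the Hilbert-Burch factorisation *)

Lemma exists_minimal (P : nat -> Prop) :
  (exists k, P k) -> exists k, P k /\ forall j, P j -> (k <= j)%N.
Proof.
move=> [k Pk]; elim/ltn_ind: k Pk => k IH Pk.
have [[j [Pj jk]]|no_smaller] := classic (exists j, P j /\ (j < k)%N); first exact: IH j jk Pj.
exists k; split=> // j Pj; rewrite leqNgt; apply/negP => jk.
by apply: no_smaller; exists j.
Qed.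

Section Syzygies.
Variable F : fieldType.
Local Notation PV := (vec3 {poly F}).
Implicit Types (P Q S T U p q : PV).

Definition min_syz T p := [/\ dot p T = 0, p <> v0 _ &
  forall S, dot S T = 0 -> S <> v0 _ -> (vsize p <= vsize S)%N].

Lemma exists_min_syz T S : dot S T = 0 -> S <> v0 _ ->
  exists p, min_syz T p /\ (vsize p <= vsize S)%N.
Proof.
move=> ST S0.
have [k [[p [pT p0 <-]] pmin]] := exists_minimal
  (ex_intro (fun k => exists p, [/\ dot p T = 0, p <> v0 _ & vsize p = k]) _
    (ex_intro _ S (And3 ST S0 erefl))).
exists p; split; last exact: pmin (ex_intro _ S (And3 ST S0 erefl)).
by split=> // S' S'T S'0; apply: pmin; exists S'.
Qed.

Lemma coprimep_unimodular (x y z : {poly F}) :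
  coprimep (gcdp x y) z -> exists e, dot e (Vec3 x y z) = 1.
Proof.
case/Bezout_eq1_coprimepP => [[u1 u2]] /= u12.
case: (Bezoutp x y) => [[w1 w2]] /= /eqpP [[c1 c2]] /andP [/= c10 c20] gxy.
have gxyE : gcdp x y = (c2^-1 * c1)%:P * (w1 * x + w2 * y).
  by rewrite polyCM -mulrA !mul_polyC gxy scalerA mulVf // scale1r.
exists (Vec3 (u1 * (c2^-1 * c1)%:P * w1) (u1 * (c2^-1 * c1)%:P * w2) u2).
by rewrite -u12 gxyE /dot /=; ring.
Qed.

(* A common factor g of the entries of p would give the smaller syzygy p / g. *)
Lemma min_syz_unimodular T p : min_syz T p -> exists e, dot e p = 1.
Proof.
case=> pT p0 pmin; set g : {poly F} := gcdp (gcdp (vx p) (vy p)) (vz p).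
have [g1|g1] := eqVneq (size g) 1%N.
  by rewrite (vec3E p); apply: coprimep_unimodular; rewrite coprimep_def g1.
have gx : g %| vx p := dvdp_trans (dvdp_gcdl _ _) (dvdp_gcdl _ _).
have gy : g %| vy p := dvdp_trans (dvdp_gcdl _ _) (dvdp_gcdr _ _).
have gz : g %| vz p := dvdp_gcdr _ _.
have g0 : g != 0.
  apply: contra_notN p0; rewrite !gcdp_eq0 => /andP [/andP [/eqP x0 /eqP y0] /eqP z0].
  by rewrite (vec3E p) x0 y0 z0.
set p' : PV := Vec3 (vx p %/ g) (vy p %/ g) (vz p %/ g).
have pE : p = vscale g p'.
  by rewrite (vec3E p) /vscale /p' /=; congr Vec3; rewrite mulrC divpK.
have p'0 : p' <> v0 _ by move=> p'0; apply: p0; rewrite pE p'0 vscalev0.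
have p'T : dot p' T = 0.
  by move: pT; rewrite pE dot_scalel => /eqP; rewrite mulf_eq0 (negbTE g0) => /eqP.
have g_gt1 : (1 < size g)%N by rewrite ltn_neqAle eq_sym g1 size_poly_gt0.
exfalso; have := vsize_vscale_lower g0 p'0; rewrite -pE; have := pmin p' p'T p'0; lia.
Qed.

Lemma cross_unimodular_small X T e : dot T e = 1 -> cross X T = v0 _ ->
  (vsize X < vsize T)%N -> X = v0 _.
Proof.
move=> Te XT0 XT; rewrite (cross_eq0_scale XT0 Te).
have [->|a0] := eqVneq (dot X e) 0; first by rewrite vscale0v.
have T0 := dot_eq1_neq0 Te.
have := vsize_vscale_lower a0 T0; rewrite -(cross_eq0_scale XT0 Te); lia.
Qed.

(* The converse half of the Hilbert-Burch theorem for three polynomials. *)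
Lemma cross_min_syz P Q e : dot (cross P Q) e = 1 ->
  (vsize P + vsize Q <= (vsize (cross P Q)).+1)%N ->
  ((vsize P).*2 <= (vsize (cross P Q)).+1)%N -> min_syz (cross P Q) P.
Proof.
set T := cross P Q => Te PQ PP; have T0 := dot_eq1_neq0 Te.
have P0 : P <> v0 _ by move=> P0; apply: T0; rewrite /T P0 cross0v.
split=> [|//|S ST S0]; first exact: dot_crossl.
rewrite leqNgt; apply/negP => SP.
have SQ0 : cross S Q = v0 _.
  apply: cross_unimodular_small Te _ _; first by rewrite cross_cross_commonr ST vscale0v.
  by have := vsize_cross S Q; lia.
have PS0 : cross P S = v0 _.
  apply: cross_unimodular_small Te _ _.
    by rewrite cross_cross_commonl ST oppr0 vscale0v.
  by have := vsize_cross P S; lia.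
by apply: T0; apply: cross_eq0_trans S0 PS0 SQ0.
Qed.

(* If the top coefficient of p x q cancels, the top coefficient of q is
   parallel to that of p and can be removed by a multiple of p. *)
Lemma cross_factor_reduce p q T m d : cross p q = T -> vsize p = m.+1 ->
  vsize q = d.+1 -> (m <= d)%N -> (vsize T <= m + d)%N ->
  exists q', cross p q' = T /\ (vsize q' <= d)%N.
Proof.
move=> pqT pm qd md Tmd.
have top0 : cross (vcoef p m) (vcoef q d) = v0 F.
  by rewrite -vcoef_cross ?pm ?qd // pqT vcoef_default.
have [l ql] : exists l, vcoef q d = vscale l (vcoef p m).
  apply: cross_eq0_parallel; first exact: vcoef_lead_neq0.
  by rewrite crossNC top0 vscalev0.
exists (vadd q (vscale (- l)%:P (vscale 'X^(d - m) p))); split.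
  by rewrite cross_addr !cross_scaler crossvv !vscalev0 vaddv0.
apply/vsize_leqP => j dj; rewrite vcoef_vadd vcoef_vscaleC vcoef_vscaleXn.
rewrite ltnNge (leq_trans (leq_subr _ _) dj) /=.
move: dj; rewrite leq_eqVlt => /orP [/eqP <-|dj]; first by rewrite subKn // ql vadd_scaleN.
by rewrite !vcoef_default ?vscalev0 ?vaddv0 ?qd ?pm //; lia.
Qed.

Lemma syz_cross_factor p T e m n : dot p T = 0 -> dot e p = 1 ->
  vsize p = m.+1 -> vsize T = n.+1 -> (m <= n - m)%N ->
  exists q, cross p q = T /\ vsize q = (n - m).+1.
Proof.
move=> pT ep pm Tn mnm.
have pTe : cross p (cross T e) = T.
  by rewrite cross_crossr dotC ep pT oppr0 vscale0v vaddv0 vscale1v.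
have [d [[q [pqT <-]] qmin]] := exists_minimal
  (ex_intro (fun d => exists q, cross p q = T /\ vsize q = d) _
    (ex_intro _ (cross T e) (conj pTe erefl))).
exists q; split=> //; have q0 : q <> v0 _.
  by move=> q0; move: Tn; rewrite -pqT q0 crossv0 /vsize /= size_poly0.
have [d' qd'] : exists d', vsize q = d'.+1 by exists (vsize q).-1; rewrite prednK ?vsize_gt0.
have nmd' : (n <= m + d')%N by have := vsize_cross p q; rewrite pqT Tn pm qd'; lia.
rewrite qd'; apply/eqP; rewrite eqSS eqn_leq; apply/andP; split; last by lia.
rewrite leqNgt; apply/negP => d'big.
have md' : (m <= d')%N by lia.
have Tmd' : (vsize T <= m + d')%N by rewrite Tn; lia.
have [q' [pq'T q'd']] := cross_factor_reduce pqT pm qd' md' Tmd'.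
by have := qmin _ (ex_intro _ q' (conj pq'T erefl)); rewrite qd'; lia.
Qed.

End Syzygies.

(** * Deforming a triple to the next class *)

Section ClassDeformation.
Variable K : closedFieldType.
Local Notation PV := (vec3 {poly K}).
Implicit Types (P Q T U W p q u : PV).
Local Notation inPv n U := (inP n (vx U) (vy U) (vz U)).
Local Notation inPmuv n mu U := (inPmu n mu (vx U) (vy U) (vz U)).

Lemma triple_neq0 (A B C : {poly K}) : (A, B, C) != (0, 0, 0) <-> Vec3 A B C <> v0 _.
Proof.
split=> [/negP ABC [] A0 B0 C0 | ABC]; first by apply: ABC; rewrite A0 B0 C0.
by apply/negP => /eqP [] A0 B0 C0; apply: ABC; rewrite A0 B0 C0.
Qed.

Lemma tdeg_vsize (A B C : {poly K}) : tdeg A B C = (vsize (Vec3 A B C)).-1.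
Proof. by rewrite /tdeg /pdeg /vsize /=; move: (size A) (size B) (size C); lia. Qed.

Lemma is_classP a b c m :
  is_class a b c m <-> exists p, min_syz (Vec3 a b c) p /\ vsize p = m.+1.
Proof.
split=> [[[A [B [C [ABC [/triple_neq0 ABC0 ABCm]]]]] mmin] | [p [[pT p0 pmin] pm]]].
  have ABC_gt0 := vsize_gt0 ABC0; rewrite tdeg_vsize in ABCm.
  exists (Vec3 A B C); split; last by lia.
  split=> // S ST S0.
  have S0' : (vx S, vy S, vz S) != (0, 0, 0) by apply/triple_neq0; rewrite -vec3E.
  have := mmin _ _ _ ST S0'; rewrite tdeg_vsize -vec3E.
  by have := vsize_gt0 S0; lia.
split.
  exists (vx p), (vy p), (vz p); rewrite triple_neq0 tdeg_vsize -vec3E pm.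
  by split.
move=> A B C ABC /triple_neq0 ABC0; rewrite tdeg_vsize.
by have := pmin (Vec3 A B C) ABC ABC0; lia.
Qed.

Lemma roots_finite (P : {poly K}) : P != 0 ->
  exists rs : seq K, forall r, root P r -> r \in rs.
Proof.
move=> P0; have [rs PE] := closed_field_poly_normal P; exists rs => r.
by rewrite PE rootZ ?lead_coef_eq0 // root_prod_XsubC.
Qed.

Lemma poly_eq0_cofinite (Q : {poly K}) (L : seq K) :
  (forall s, s \notin L -> Q.[s] = 0) -> Q = 0.
Proof.
move=> QL; apply/eqP; apply: contraT => Q0.
have /closed_nonrootP [s] : Q * \prod_(l <- L) ('X - l%:P) != 0.
  by rewrite mulf_neq0 // monic_neq0 // monic_prod_XsubC.
rewrite rootM root_prod_XsubC negb_or => /andP [/rootP Qs sL].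
by have := QL s sL.
Qed.

Lemma coprimep_no_common_root (x y z : {poly K}) :
  (forall r, root x r -> root y r -> root z r -> False) -> coprimep (gcdp x y) z.
Proof.
move=> xyz; rewrite coprimep_def; apply/negPn/negP => /closed_rootP [r gr].
apply: (xyz r).
- exact: root_dvdp (dvdp_trans (dvdp_gcdl _ _) (dvdp_gcdl _ _)) gr.
- exact: root_dvdp (dvdp_trans (dvdp_gcdl _ _) (dvdp_gcdr _ _)) gr.
- exact: root_dvdp (dvdp_gcdr _ _) gr.
Qed.

Lemma vsize_line T W (s : K) n : vsize T = n.+1 -> (vsize W <= n.+1)%N ->
  s \notin ratios (vcoef T n) (vcoef W n) -> vsize (vadd T (vscale s%:P W)) = n.+1.
Proof.
move=> Tn Wn sTW; apply: vsize_vcoef_eq; first by apply: vsize_vadd; rewrite ?Tn ?vsize_vscaleC.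
rewrite vcoef_vadd vcoef_vscaleC; apply: vadd_scale_neq0 sTW.
exact: vcoef_lead_neq0.
Qed.

(* A common root r of T + s W forces T(r) and W(r) to be parallel, so r is a
   root of the nonzero polynomial f . (T x W), and s is a ratio at r. *)
Lemma coprime_line T W : coprimep (gcdp (vx T) (vy T)) (vz T) -> cross T W <> v0 _ ->
  exists L : seq K, forall s, s \notin L ->
    let Ts := vadd T (vscale s%:P W) in coprimep (gcdp (vx Ts) (vy Ts)) (vz Ts).
Proof.
move=> Tcop TW0; have [e] := coprimep_unimodular Tcop; rewrite -vec3E => eT.
have [f fTW] := dot_neq0 TW0; have [rs rsP] := roots_finite fTW.
exists (flatten [seq ratios (vhorner T r) (vhorner W r) | r <- rs]) => s sL /=.
apply: coprimep_no_common_root => r r1 r2 r3.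
have TWr : vadd (vhorner T r) (vscale s (vhorner W r)) = v0 K.
  have : vhorner (vadd T (vscale s%:P W)) r = v0 K.
    by rewrite /vhorner (rootP r1) (rootP r2) (rootP r3).
  by rewrite vhorner_vadd vhorner_vscale hornerC.
have Tr0 : vhorner T r <> v0 K.
  by apply: (@dot_eq1_neq0 _ _ (vhorner e r)); rewrite dotC -horner_dot eT hornerC.
have rrs : r \in rs.
  apply: rsP; apply/rootP; rewrite horner_dot vhorner_cross (vadd_scale_eq0 TWr).
  by rewrite cross_scalel crossvv vscalev0 dotv0.
apply: (vadd_scale_neq0 Tr0 _ TWr); apply: contra sL => sr.
by apply/flatten_mapP; exists r.
Qed.

Lemma inP_line n T W : inPv n T -> (vsize W <= n.+1)%N -> cross T W <> v0 _ ->
  exists L : seq K, forall s, s \notin L -> inPv n (vadd T (vscale s%:P W)).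
Proof.
case=> c0 [Tcop Tn] Wn TW0; have [L Lcop] := coprime_line Tcop TW0.
set k := (size (vz T)).-1.
exists (- (vz T)`_k / (vz W)`_k :: ratios (vcoef T n) (vcoef W n) ++ L) => s.
rewrite in_cons negb_or mem_cat negb_or => /and3P [sc sn sL].

split; last by split; [exact: Lcop | exact: vsize_line Tn Wn sn].
apply/eqP => cs0; have := congr1 (fun r : {poly K} => r`_k) cs0; rewrite /= coefD coefCM coef0.
apply/eqP; apply: addr_scale_neq0 sc.
by rewrite /k -lead_coefE lead_coef_eq0.
Qed.

(* The top coefficient of u is minus that of q, so adding X^d u to q cancels it. *)
Lemma exists_cancelling_vector T q d k : T <> v0 _ -> vsize q = (d + k).+2 ->
  exists u, [/\ vsize u = k.+2, dot T u != 0 &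
                (vsize (vadd q (vscale 'X^d u)) <= (d + k).+1)%N].
Proof.
move=> T0 qdk; set lq := vcoef q (d + k).+1.
set X1 := vscale (-1)%:P (vscale 'X^(k.+1) (vconst lq)).
have [v [v1 Tv]] : exists v, (vsize v <= 1)%N /\ dot T (vadd X1 v) != 0.
  have TX1 : dot T X1 = (-1)%:P * ('X^(k.+1) * dot T (vconst lq)) by rewrite !dot_scaler.
  have [Tl0|Tl0] := eqVneq (dot T (vconst lq)) 0.
    have [f [f1 fT]] := dot_neq0_small T0.
    by exists f; rewrite dot_addr TX1 Tl0 !mulr0 add0r dotC.
  exists (v0 _); split; first by rewrite /vsize /= size_poly0.
  rewrite dot_addr dotv0 addr0 TX1 !mulf_neq0 //; last exact: monic_neq0 (monicXn _ _).
  by rewrite polyC_eq0 oppr_eq0 oner_eq0.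
have utop : vcoef (vadd X1 v) k.+1 = vscale (-1) lq.
  rewrite vcoef_vadd vcoef_vscaleC vcoef_vscaleXn ltnn subnn vcoef_vconst /=.
  by rewrite vcoef_default ?vaddv0 //; apply: leq_trans v1 _.
have ulow j : (k.+2 <= j)%N -> vcoef (vadd X1 v) j = v0 K.
  move=> kj; rewrite vcoef_vadd vcoef_vscaleC vcoef_vscaleXn ltnNge (ltnW kj) /=.
  rewrite vcoef_vconst subn_eq0 leqNgt kj /= vscalev0 vcoef_default ?vaddv0 //.
  by apply: leq_trans v1 _; lia.
exists (vadd X1 v); split => //.
  apply: vsize_vcoef_eq; first exact/vsize_leqP.
  rewrite utop => /vscale_eq0; rewrite oppr_eq0 oner_eq0 => /(_ isT).
  exact: vcoef_lead_neq0.
apply/vsize_leqP => j; rewrite vcoef_vadd vcoef_vscaleXn.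
rewrite leq_eqVlt => /orP [/eqP <-|dkj].
  by rewrite ltnNge -addnS leq_addr /= addKn utop addnS -[X in vadd X _]vscale1v vadd_scaleN.
have dj : (d <= j)%N by lia.
rewrite ltnNge dj /= ulow; last by lia.
by rewrite vcoef_default ?vaddv0 ?qdk.
Qed.

Lemma deformation_class n m d p q u (s : K) : s != 0 -> (2 * m + 2 <= n)%N ->
  (d + m.+1 = n - m)%N -> vsize p = m.+1 -> vsize u = m.+2 ->
  (vsize (vadd q (vscale 'X^d u)) <= n - m)%N ->
  let Ts := vadd (cross p q) (vscale s%:P (cross u (vadd q (vscale 'X^d u)))) in
  inPv n Ts -> inPmuv n m.+1 Ts.
Proof.
move=> s0 mn dm pm um qu Ts Tsin; set q' := vadd q (vscale 'X^d u) in qu *.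
set P := vadd p (vscale s%:P u); set Q := vadd (vscale ((s^-1)%:P * 'X^d) p) q'.
have PQ : cross P Q = Ts.
  by rewrite /Ts cross_deformation -polyCM mulfV // subrr mul0r vscale0v vaddv0.
have Pm : vsize P = m.+2.
  apply: vsize_vcoef_eq; first by apply: vsize_vadd; rewrite ?pm ?vsize_vscaleC ?um.
  rewrite vcoef_vadd vcoef_vscaleC vcoef_default ?pm // vadd0v.
  by move/(vscale_eq0 s0); apply: vcoef_lead_neq0.
have Qm : (vsize Q <= n - m)%N.
  apply: vsize_vadd => //.
  by apply: leq_trans (vsize_vscaleCXn _ _ _) _; rewrite pm; lia.
rewrite -PQ in Tsin *; split=> //; apply/is_classP; exists P; rewrite -vec3E; split=> //.
case: (Tsin) => _ [PQcop PQn]; have [e] := coprimep_unimodular PQcop.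
rewrite -vec3E dotC => PQe; have PQn' : vsize (cross P Q) = n.+1 := PQn.
by apply: cross_min_syz PQe _ _; rewrite PQn' Pm; lia.
Qed.

Lemma class_succ_line n m a b c : (2 * m + 2 <= n)%N -> inPmu n m a b c ->
  exists (W : PV) (L : seq K), forall s, s \notin L ->
    inPmu n m.+1 (a + s%:P * vx W) (b + s%:P * vy W) (c + s%:P * vz W).
Proof.
move=> mn [Tin /is_classP [p [pmin pm]]]; set T := Vec3 a b c.
have [e ep] := min_syz_unimodular pmin; case: (pmin) => pT p0 _.
case: (Tin) => c0 [_ Tn]; have mnm : (m <= n - m)%N by lia.
have [q [pqT qn]] := syz_cross_factor pT ep pm Tn mnm.
have [d dE] : {d | d = (n - m - m.+1)%N} by exists (n - m - m.+1)%N.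
have T0 : T <> v0 _ by case=> _ _ c0'; rewrite c0' eqxx in c0.
have qdm : vsize q = (d + m).+2 by rewrite qn; congr _.+1; lia.
have [u [um Tu qu]] := exists_cancelling_vector T0 qdm.
set q' := vadd q (vscale 'X^d u) in qu *; set W := cross u q'.
have Wn : (vsize W <= n.+1)%N by have := vsize_cross u q'; rewrite -/W; lia.
have TW0 : cross T W <> v0 _.
  rewrite /W /q' /T -pqT cross_cross_shift pqT -/T => /vscale_eq0.
  rewrite oppr_eq0 => /(_ Tu) q0.
  by move: qn; rewrite q0 /vsize /= size_poly0.
have [L Lin] := inP_line (T := T) Tin Wn TW0.
exists W, (0 :: L) => s; rewrite in_cons negb_or => /andP [s0 sL].
change (inPmuv n m.+1 (vadd T (vscale s%:P W))); have := Lin s sL.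
rewrite /T -pqT => Tsin; apply: (deformation_class s0 mn _ pm um (leq_trans qu _) Tsin); lia.
Qed.

End ClassDeformation.

(** * Zariski closure *)

Section Closure.
Variable K : closedFieldType.

Lemma meval_line N (P : {mpoly K[N]}) (x y : 'I_N -> K) :
  exists Q : {poly K}, forall s, Q.[s] = P.@[fun i => x i + s * y i].
Proof.
exists (\sum_(m <- msupp P) (P@_m)%:P * \prod_(i < N) ((x i)%:P + 'X * (y i)%:P) ^+ m i).
move=> s; rewrite mevalE horner_sum; apply: eq_bigr => m _.
rewrite hornerM hornerC horner_prod; congr (_ * _); apply: eq_bigr => i _.
by rewrite horner_exp hornerD hornerC hornerM hornerX hornerC mulrC.
Qed.

Lemma zclosure_line N (S : ('I_N -> K) -> Prop) (x y : 'I_N -> K) (L : seq K) :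
  (forall s, s \notin L -> exists2 z, S z & z =1 (fun i => x i + s * y i)) ->
  zclosure S x.
Proof.
move=> SL Z [F ZF] SZ; apply/ZF => P FP.
have [Q QP] := meval_line P x y.
suff Q0 : Q = 0.
  by have := QP 0; rewrite Q0 horner0 => ->; apply: meval_eq => i; rewrite mul0r addr0.
apply: (poly_eq0_cofinite (L := L)) => s sL; have [z Sz zE] := SL s sL.
by rewrite QP -(meval_eq _ zE); move/ZF: (SZ _ Sz); apply.
Qed.

Lemma zclosure_trans N (S T : ('I_N -> K) -> Prop) :
  (forall y, S y -> zclosure T y) -> forall x, zclosure S x -> zclosure T x.
Proof. by move=> ST x Sx Z Zc TZ; apply: Sx => // y Sy; exact: ST. Qed.

Lemma coords_line n (a b c a' b' c' : {poly K}) s i :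
  coords n (a + s%:P * a') (b + s%:P * b') (c + s%:P * c') i =
  coords n a b c i + s * coords n a' b' c' i.
Proof. by rewrite /coords; case: ifP => _; [|case: ifP => _]; rewrite coefD coefCM. Qed.

Lemma Pmu_pts_closure_succ n m (a b c : {poly K}) : (2 * m + 2 <= n)%N ->
  inPmu n m a b c -> zclosure (Pmu_pts n m.+1) (coords n a b c).
Proof.
move=> mn abc; have [W [L WL]] := class_succ_line mn abc.
apply: (zclosure_line (y := coords n (vx W) (vy W) (vz W)) (L := L)) => s sL.
exists (coords n (a + s%:P * vx W) (b + s%:P * vy W) (c + s%:P * vz W)).
  by do 3 eexists; split; first exact: WL s sL.
exact: coords_line.
Qed.

Lemma class_le_zclosure n m mu (a b c : {poly K}) : (mu <= n./2)%N -> (m <= mu)%N ->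
  inPmu n m a b c -> zclosure (Pmu_pts n mu) (coords n a b c).
Proof.
move=> mun; elim: mu mun => [|mu IH] mun.
  by rewrite leqn0 => /eqP -> abc Z _; apply; exists a, b, c.
rewrite leq_eqVlt => /orP [/eqP -> abc Z _|mmu abc]; first by apply; exists a, b, c.
apply: zclosure_trans (IH (ltnW mun) mmu abc) => _ [a' [b' [c' [abc' ->]]]].
by apply: Pmu_pts_closure_succ abc'; lia.
Qed.

End Closure.

(** * The class is upper semicontinuous *)

Lemma sum_ord_widen (R : nmodType) (m M : nat) (G : nat -> R) : (m <= M)%N ->
  (forall i, (m <= i < M)%N -> G i = 0) -> \sum_(i < m) G i = \sum_(i < M) G i.
Proof.
move=> mM G0; rewrite (big_ord_widen _ _ mM) big_mkcond /=.
by apply: eq_bigr => i _; case: ifP => // /negbT; rewrite -leqNgt => mi; rewrite G0 // mi ltn_ord.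
Qed.

Lemma row_free_minor (F : fieldType) m n (M : 'M[F]_(m, n)) :
  row_free M -> exists f : 'I_m -> 'I_n, \det (colsub f M) != 0.
Proof.
move=> Mfree; have MTfull : row_full M^T by rewrite /row_full mxrank_tr.
exists (fullrankfun MTfull); rewrite -det_tr trmx_mxsub -unitfE -unitmxE.
exact: fullrowsub_unit.
Qed.

(* Indices beyond the 3n + 3 coordinates are never used; they are sent to 0. *)
Definition coord_ord n (t : nat) : 'I_(3 * n.+1) := insubd (Ordinal (muln_gt0 3 n.+1)) t.

Lemma coord_ordK n t : (t < 3 * n.+1)%N -> nat_of_ord (coord_ord n t) = t.
Proof. by move=> tn; rewrite /coord_ord val_insubd tn. Qed.

Section Sylvester.
Variable K : closedFieldType.
Variables n mu : nat.
Local Notation PV := (vec3 {poly K}).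
Local Notation rows := (mu.+1 + mu.+1 + mu.+1)%N.
Local Notation cols := (n + mu.+1)%N.

(* Row j of block o holds the coefficients ent (o (n + 1) + t), t <= n, of
   the o-th component shifted by j, so that multiplying the coefficient rows
   of (A, B, C), of degree <= mu, gives the coefficients of A a + B b + C c. *)
Definition sylv_block (R : nmodType) (ent : nat -> R) (o : nat) : 'M[R]_(mu.+1, cols) :=
  \matrix_(j, k) (if ((j <= k) && (k - j <= n))%N then ent (o * n.+1 + (k - j))%N else 0).
Definition sylv_mx (R : nmodType) (ent : nat -> R) :=
  col_mx (col_mx (sylv_block ent 0) (sylv_block ent 1)) (sylv_block ent 2).
Definition sylv_pt (x : 'I_(3 * n.+1) -> K) := sylv_mx (fun t => x (coord_ord n t)).
Definition sylv_mpoly := sylv_mx (fun t => ('X_(coord_ord n t) : {mpoly K[3 * n.+1]})).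

Definition minors_vanish (x : 'I_(3 * n.+1) -> K) : Prop :=
  forall f : 'I_rows -> 'I_cols, \det (colsub f (sylv_pt x)) = 0.

Definition coef_row (A : {poly K}) : 'rV_(mu.+1) := \row_(j < mu.+1) A`_j.
Definition syz_row (A B C : {poly K}) : 'rV_rows :=
  row_mx (row_mx (coef_row A) (coef_row B)) (coef_row C).

Lemma meval_sylv_mpoly x : map_mx (meval x) sylv_mpoly = sylv_pt x.
Proof.
rewrite /sylv_mpoly /sylv_mx /sylv_pt !map_col_mx; congr col_mx; [congr col_mx|];
  by apply/matrixP => j k; rewrite !mxE; case: ifP => _; rewrite ?mevalXU ?meval0.
Qed.

Lemma minors_vanish_closed : zclosed minors_vanish.
Proof.
exists (fun P => exists f : 'I_rows -> 'I_cols, P = \det (colsub f sylv_mpoly)) => x.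
have minorE f : (\det (colsub f sylv_mpoly)).@[x] = \det (colsub f (sylv_pt x)).
  by rewrite -[meval x]/(GRing.RMorphism.sort _) -det_map_mx map_mxsub meval_sylv_mpoly.
split=> [x0 P [f ->] | Px f]; first by rewrite minorE.
by rewrite -minorE; apply: Px; exists f.
Qed.

Lemma mulmx_sylv_block (ent : nat -> K) (o : nat) (A a : {poly K}) :
  (size A <= mu.+1)%N -> (size a <= n.+1)%N ->
  (forall t, (t <= n)%N -> ent (o * n.+1 + t)%N = a`_t) ->
  forall k : 'I_cols, (coef_row A *m sylv_block ent o) 0 k = (A * a)`_k.
Proof.
move=> Amu an enta k; rewrite !mxE coefM.
pose G i := A`_i * (if (i <= k)%N then a`_(k - i) else 0).
transitivity (\sum_(i < mu.+1) G i).
  apply: eq_bigr => j _; rewrite !mxE /G; case: (leqP j k) => //= jk.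
  case: (leqP (k - j) n) => kjn; first by rewrite enta.
  by rewrite [a`__]nth_default ?mulr0 //; apply: leq_trans an kjn.
rewrite (@sum_ord_widen _ _ (mu.+1 + k.+1)) ?leq_addr //; last first.
  by move=> i /andP [mui _]; rewrite /G nth_default ?mul0r //; apply: leq_trans Amu mui.
have -> : \sum_(j < k.+1) A`_j * a`_(k - j) = \sum_(j < k.+1) G j.
  by apply: eq_bigr => j _; rewrite /G -ltnS ltn_ord.
rewrite [RHS](@sum_ord_widen _ _ (mu.+1 + k.+1)) ?leq_addl //.
by move=> i /andP [ki _]; rewrite /G leqNgt ki mulr0.
Qed.

Lemma mulmx_sylv (a b c A B C : {poly K}) :
  (vsize (Vec3 a b c) <= n.+1)%N -> (vsize (Vec3 A B C) <= mu.+1)%N ->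
  forall k : 'I_cols,
  (syz_row A B C *m sylv_pt (coords n a b c)) 0 k = (A * a + B * b + C * c)`_k.
Proof.
move=> /vsize_leP [an bn cn] /vsize_leP [Amu Bmu Cmu] k.
rewrite /sylv_pt /sylv_mx !mul_row_col [LHS]mxE [X in X + _ = _]mxE !coefD.
set ent := fun t : nat => coords n a b c (coord_ord n t).
have ent0 t : (t <= n)%N -> ent (0 * n.+1 + t)%N = a`_t.
  by move=> tn; rewrite /ent /coords coord_ordK; [rewrite ifT //|]; lia.
have ent1 t : (t <= n)%N -> ent (1 * n.+1 + t)%N = b`_t.
  move=> tn; rewrite /ent /coords coord_ordK; last by lia.
  by rewrite ifF ?ifT; [congr nth|..]; lia.
have ent2 t : (t <= n)%N -> ent (2 * n.+1 + t)%N = c`_t.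
  move=> tn; rewrite /ent /coords coord_ordK; last by lia.
  by rewrite ifF ?ifF; [congr nth|..]; lia.
by rewrite (mulmx_sylv_block Amu an ent0) (mulmx_sylv_block Bmu bn ent1)
  (mulmx_sylv_block Cmu cn ent2).
Qed.

Lemma coef_row0 : coef_row 0 = 0.
Proof. by apply/rowP => j; rewrite !mxE coef0. Qed.

Lemma coef_row_eq0 (A : {poly K}) : (size A <= mu.+1)%N -> coef_row A = 0 -> A = 0.
Proof.
move=> Amu A0; apply/polyP => j; rewrite coef0.
have [jmu|muj] := ltnP j mu.+1; last by rewrite nth_default // (leq_trans Amu muj).
by have := congr1 (fun M : 'rV_(mu.+1) => M 0 (Ordinal jmu)) A0; rewrite !mxE.
Qed.

Lemma coef_rowK (v : 'rV_(mu.+1)) : coef_row (\poly_(j < mu.+1) v 0 (inord j)) = v.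
Proof. by apply/rowP => j; rewrite mxE coef_poly ltn_ord inord_val. Qed.

Lemma syz_row_eq0 (A B C : {poly K}) : (vsize (Vec3 A B C) <= mu.+1)%N ->
  syz_row A B C = 0 -> Vec3 A B C = v0 _.
Proof.
move=> /vsize_leP [Amu Bmu Cmu] /eqP; rewrite !row_mx_eq0.
case/andP => [/andP [/eqP A0 /eqP B0] /eqP C0].
by move: (coef_row_eq0 Amu A0) (coef_row_eq0 Bmu B0) (coef_row_eq0 Cmu C0) => /= -> -> ->.
Qed.

Lemma syz_rowP (v : 'rV_rows) :
  exists A B C, (vsize (Vec3 A B C) <= mu.+1)%N /\ v = syz_row A B C.
Proof.
exists (\poly_(j < mu.+1) lsubmx (lsubmx v) 0 (inord j)),
  (\poly_(j < mu.+1) rsubmx (lsubmx v) 0 (inord j)), (\poly_(j < mu.+1) rsubmx v 0 (inord j)).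
split; first by apply/vsize_leP; split; apply: size_poly.
by rewrite /syz_row !coef_rowK !hsubmxK.
Qed.

Lemma sylv_syz (a b c A B C : {poly K}) :
  (vsize (Vec3 a b c) <= n.+1)%N -> (vsize (Vec3 A B C) <= mu.+1)%N ->
  syz_row A B C *m sylv_pt (coords n a b c) = 0 <-> A * a + B * b + C * c = 0.
Proof.
move=> abc ABC; split=> [vM0|syz]; last first.
  by apply/rowP => k; rewrite mulmx_sylv // syz coef0 mxE.
apply/polyP => k; rewrite coef0; have [kc|ck] := ltnP k cols.
  by have := congr1 (fun M : 'rV_cols => M 0 (Ordinal kc)) vM0; rewrite mulmx_sylv // mxE.
rewrite nth_default //; apply: leq_trans ck.
move/vsize_leP: abc => [an bn cn]; move/vsize_leP: ABC => [Amu Bmu Cmu].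
have -> : cols = (mu.+1 + n.+1).-1 by lia.
by apply: size_polyD_le; [apply: size_polyD_le|]; exact: size_polyM_le.
Qed.

Lemma Pmu_minors_vanish y : Pmu_pts n mu y -> minors_vanish y.
Proof.
move=> [a [b [c [[[_ [_ abcn]] /is_classP [p [[pT p0 _] pmu]]] ->]]]] f.
have abc : (vsize (Vec3 a b c) <= n.+1)%N by rewrite /vsize /= abcn.
have pmu' : (vsize (Vec3 (vx p) (vy p) (vz p)) <= mu.+1)%N by rewrite -vec3E pmu.
have pM := proj2 (sylv_syz abc pmu') pT.
apply/eqP; apply: contraT => minor0.
have minor_unit : colsub f (sylv_pt (coords n a b c)) \in unitmx.
  by rewrite unitmxE unitfE.
have prow0 : syz_row (vx p) (vy p) (vz p) = 0.
  rewrite -[LHS](mulmxK minor_unit) mulmx_colsub pM.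
  by rewrite (_ : colsub f 0 = 0) ?mul0mx //; apply/matrixP => i j; rewrite !mxE.
by case: p0; rewrite (vec3E p) (syz_row_eq0 pmu' prow0).
Qed.

Lemma minors_vanish_syz (a b c : {poly K}) : (vsize (Vec3 a b c) <= n.+1)%N ->
  minors_vanish (coords n a b c) ->
  exists S : PV, [/\ dot S (Vec3 a b c) = 0, S <> v0 _ & (vsize S <= mu.+1)%N].
Proof.
move=> abc minors0.
have : ~~ row_free (sylv_pt (coords n a b c)).
  by apply/negP => /row_free_minor [f]; rewrite minors0 eqxx.
rewrite -kermx_eq0 => /rowV0Pn [v /sub_kermxP vM v0].
have [A [B [C [ABC vE]]]] := syz_rowP v.
exists (Vec3 A B C); split=> //; first by apply/(sylv_syz abc ABC); rewrite -vE.
by case=> A0 B0 C0; move: v0; rewrite vE A0 B0 C0 /syz_row coef_row0 !row_mx0 eqxx.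
Qed.

End Sylvester.

Lemma zclosure_class_le (K : closedFieldType) n mu (a b c : {poly K}) : inP n a b c ->
  zclosure (Pmu_pts n mu) (coords n a b c) -> exists m, (m <= mu)%N /\ inPmu n m a b c.
Proof.
move=> abc_in abc_cl; case: (abc_in) => _ [_ abcn].
have abc : (vsize (Vec3 a b c) <= n.+1)%N by rewrite /vsize /= abcn.
have minors0 : @minors_vanish K n mu (coords n a b c).
  by apply: abc_cl; [exact: minors_vanish_closed | exact: Pmu_minors_vanish].
have [S [ST S0 Smu]] := minors_vanish_syz abc minors0.
have [p [pmin pS]] := exists_min_syz ST S0; case: (pmin) => _ p0 _; have p_gt0 := vsize_gt0 p0.
exists (vsize p).-1; split; first by lia.
by split=> //; apply/is_classP; exists p; rewrite prednK.
Qed.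

Unset Implicit Arguments.

Theorem mainTheorem2 (K : closedFieldType) (n mu : nat) :
  (1 <= n)%N -> (mu <= n./2)%N ->
  forall a b c : {poly K}, inP n a b c ->
    (zclosure (Pmu_pts n mu) (coords n a b c) <->
     exists m : nat, (m <= mu)%N /\ inPmu n m a b c).
Proof.
move=> _ mun a b c abc; split; first exact: zclosure_class_le.
by case=> m [mmu abcm]; exact: class_le_zclosure mun mmu abcm.
Qed.
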